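(* Let $w$ be a word and let $v_x, v_y$ be vertices of $G(w)$ with $\mathrm{dist}(v_x, v_y) = d$. Let $\chi_i$ denote the index of the $i$-th occurrence of $x$ in $w$ and $\gamma_j$ the index of the $j$-th occurrence of $y$ in $w$. Then for every $i$ such that $\gamma_i$ exists: if $\chi_{i-d}$ exists then $\chi_{i-d} \le \gamma_i$, and if $\chi_{i+d}$ exists then $\gamma_i \le \chi_{i+d}$.
   Context: For a set of symbols $\mathcal S$, $\pi_{\mathcal S}(w)$ is the subsequence of $w$ consisting of all occurrences of symbols in $\mathcal S$. Symbols $x,y$ alternate in $w$ if $\pi_{\{x,y\}}(w) \in \{(xy)^k, (xy)^kx, (yx)^k, (yx)^ky : k \ge 0\}$. $G(w)$ has one vertex $v_a$ per symbol $a$ of the alphabet and undirected edge $(v_x,v_y)$ iff $x\neq y$ alternate in $w$; $\mathrm{dist}$ is the shortest-path distance in $G(w)$. *)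

From mathcomp Require Import all_boot.
Set Implicit Arguments. Unset Strict Implicit. Unset Printing Implicit Defensive.

Section Words.
Variable A : eqType.

Definition proj2 (x y : A) (w : seq A) : seq A :=
  filter (fun c => (c == x) || (c == y)) w.

Definition altk (x y : A) (k : nat) : seq A := flatten (nseq k [:: x; y]).

Definition alternate (x y : A) (w : seq A) : Prop :=
  exists k : nat,
    let s := proj2 x y w in
    s = altk x y k \/ s = rcons (altk x y k) x \/
    s = altk y x k \/ s = rcons (altk y x k) y.

Definition gedge (w : seq A) (x y : A) : Prop := x <> y /\ alternate x y w.

Inductive gwalk (w : seq A) : A -> A -> nat -> Prop :=
| gwalk0 x : gwalk w x x 0
| gwalkS x y z n : gedge w x y -> gwalk w y z n -> gwalk w x z n.+1.

Definition gdist (w : seq A) (x y : A) (d : nat) : Prop :=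
  gwalk w x y d /\ forall m, m < d -> ~ gwalk w x y m.

(* p (0-based position in w) is the index of the i-th occurrence of x in w,
   occurrences counted from 1 *)
Definition is_occ (w : seq A) (x : A) (i p : nat) : Prop :=
  1 <= i /\ p < size w /\ nth x w p = x /\ count (pred1 x) (take p w) = i.-1.

End Words.

(** If [a] and [b] alternate in [w], then in every prefix of [w] the numbers of
    occurrences of [a] and of [b] differ by at most one.  Along a walk of
    length [d] in [G(w)] these differences add up, so in every prefix the
    counts of [x] and [y] differ by at most [d].  Now if the [j]-th [a] came
    after the [i]-th [b] with [j + d <= i], the prefix ending at that [b]
    would contain [i] letters [b] but fewer than [j] letters [a], a gap
    exceeding [d]. *)

From mathcomp Require Import all_boot.
From mathcomp Require Import zify.

Set Implicit Arguments. Unset Strict Implicit. Unset Printing Implicit Defensive.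

Section PrefixCounts.
Variable A : eqType.
Implicit Types (a b x y : A) (w s t : seq A).

Definition prefix_count w a p := count (pred1 a) (take p w).

Lemma altkS a b k : altk a b k.+1 = altk a b k ++ [:: a; b].
Proof.
elim: k => [|k IHk] //.
by rewrite /altk /= -/(altk a b k) -/(altk a b k.+1) in IHk *; rewrite IHk.
Qed.

Lemma count_take_altk a b k n :
  let s := take n (altk a b k) in
  count (pred1 a) s <= count (pred1 b) s + 1 /\
  count (pred1 b) s <= count (pred1 a) s + 1.
Proof.
elim: k n => [|k IHk] [|[|n]] //=; first by rewrite eqxx; case: (a == b).
have [le_ab le_ba] := IHk n; rewrite /altk in le_ab le_ba.
by case: (eqVneq a b) => [<-|_] /=; rewrite !eqxx; lia.
Qed.

Lemma count_prefix_alternating a b s t :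
  (exists k, s ++ t = altk a b k \/ s ++ t = rcons (altk a b k) a) ->
  count (pred1 a) s <= count (pred1 b) s + 1 /\
  count (pred1 b) s <= count (pred1 a) s + 1.
Proof.
case=> k [] def_st.
  by have := count_take_altk a b k (size s); rewrite -def_st take_size_cat.
have def_stb : s ++ (t ++ [:: b]) = altk a b k.+1.
  by rewrite catA def_st altkS -cats1 -catA.
by have := count_take_altk a b k.+1 (size s); rewrite -def_stb take_size_cat.
Qed.

Lemma count_proj2 a b c s : (c == a) || (c == b) ->
  count (pred1 c) (proj2 a b s) = count (pred1 c) s.
Proof.
move=> c_ab; rewrite /proj2 count_filter; apply: eq_count => z /=.
by case: eqVneq => [->|].
Qed.

Lemma gedge_prefix_count w a b p : gedge w a b ->
  prefix_count w a p <= prefix_count w b p + 1 /\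
  prefix_count w b p <= prefix_count w a p + 1.
Proof.
move=> [_ [k alt_ab]]; rewrite /prefix_count.
rewrite -!(count_proj2 (a := a) (b := b) (take p w)) ?eqxx ?orbT //.
have def_w : proj2 a b w = proj2 a b (take p w) ++ proj2 a b (drop p w).
  by rewrite /proj2 -filter_cat cat_take_drop.
move: alt_ab; rewrite /= def_w => -[alt|[alt|[alt|alt]]].
- exact: count_prefix_alternating (ex_intro _ k (or_introl alt)).
- exact: count_prefix_alternating (ex_intro _ k (or_intror alt)).
- by have [? ?] := count_prefix_alternating (ex_intro _ k (or_introl alt)).
- by have [? ?] := count_prefix_alternating (ex_intro _ k (or_intror alt)).
Qed.

Lemma gwalk_prefix_count w x y n p : gwalk w x y n ->
  prefix_count w x p <= prefix_count w y p + n /\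
  prefix_count w y p <= prefix_count w x p + n.
Proof.
elim=> [z|a b c m edge_ab _ [IH1 IH2]]; first by lia.
have [? ?] := gedge_prefix_count p edge_ab; lia.
Qed.

Lemma prefix_count_mono w a p q : p <= q ->
  prefix_count w a p <= prefix_count w a q.
Proof.
move=> le_pq; rewrite /prefix_count -(cat_take_drop p (take q w)) take_takel //.
by rewrite count_cat leq_addr.
Qed.

Lemma is_occ_prefix_count w a i p :
  is_occ w a i p -> prefix_count w a p = i.-1 /\ prefix_count w a p.+1 = i.
Proof.
move=> [i_gt0 [lt_p_w [w_p count_p]]]; split=> //.
rewrite /prefix_count (take_nth a lt_p_w) -cats1 count_cat w_p /= eqxx.
by rewrite count_p; lia.
Qed.

Lemma is_occ_le_of_prefix_count w a b n i j p q :
  (forall r, prefix_count w b r <= prefix_count w a r + n) ->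
  is_occ w a j p -> is_occ w b i q -> j + n <= i -> p <= q.
Proof.
move=> bounded occ_a occ_b le_jn_i; rewrite leqNgt; apply/negP => lt_q_p.
have [count_a _] := is_occ_prefix_count occ_a.
have [_ count_b] := is_occ_prefix_count occ_b.
have := prefix_count_mono w a lt_q_p; have := bounded q.+1.
case: occ_a => j_gt0 _; lia.
Qed.

End PrefixCounts.

Theorem lemma7 (A : eqType) (w : seq A) (x y : A) (d : nat) :
  gdist w x y d ->
  forall (i g : nat), is_occ w y i g ->
    (forall c : nat, d < i -> is_occ w x (i - d) c -> c <= g) /\
    (forall c : nat, is_occ w x (i + d) c -> g <= c).
Proof.
move=> [walk_xy _] i g occ_y.
have [bound_xy bound_yx] : (forall r, prefix_count w y r <= prefix_count w x r + d) /\
                           (forall r, prefix_count w x r <= prefix_count w y r + d).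
  by split=> r; case: (gwalk_prefix_count r walk_xy).
split=> [c lt_d_i occ_x | c occ_x].
- by apply: (is_occ_le_of_prefix_count bound_xy occ_x occ_y); rewrite subnK // ltnW.
- exact: (is_occ_le_of_prefix_count bound_yx occ_y occ_x).
Qed.
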